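(* Consider the downtown bathtub model under perimeter control described in the context, with a fixed number $N_s$ of suburban commuters satisfying $N_s>\alpha n_j\left(\frac1\beta+\frac1\gamma\right)\left(\ln 2-\frac12\right)$, and let $C_s^{bp*}$ be the short-run equilibrium bathtub cost, $\theta^p\equiv\frac{C_s^{bp*}v_f}{\alpha L}$. Then (i) $$F^p(\theta^p)\equiv N_s-\alpha n_j\left(\frac1\beta+\frac1\gamma\right)\left(\frac{\theta^p}{4}+\ln 2-1\right)=0;$$ (ii) a queue develops at the perimeter boundary, and its length increases toward the desired arrival time $t^*$ (and decreases after it).
   Context: Downtown traffic: accumulation $n(t)\ge0$ evolves as $\dot n(t)=I(t)-G(t)$ with outflow $G(t)=n(t)v(t)/L$, $L>0$ the trip length, speed $v(t)=v_f(1-n(t)/n_j)$, $v_f,n_j>0$; downtown travel time $T(t)=L/v(t)$. Perimeter control: the critical accumulation is $n_j/2$; the inflow into the downtown area is $I(t)=I_p:=\frac{n_jv_f}{4L}$ when $n(t)=n_j/2$ and $I(t)=A_b(t)$ (the arrival rate of vehicles at the perimeter boundary) when $n(t)<n_j/2$. Vehicles that cannot enter wait in a first-in-first-out point queue at the boundary; if $q(t)$ is the number of queued vehicles when the commuter arriving at work at $t$ reaches the boundary, that commuter's waiting time is $T_w(t)=q(t)/I_p$. With $[t_s^p,t_e^p]$ the period during which control is active, the downtown travel time is $T^p(t)=T(t)$ for $t\le t_s^p$ or $t>t_e^p$ and $T^p(t)=\frac{L}{v_f/2}+T_w(t)$ for $t_s^p<t\le t_e^p$. A suburban commuter arriving at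 time $t$ has bathtub cost $C_s^{bp}(t)=\alpha T^p(t)+s(t)$, where $s(t)=\beta(t^*-t)$ for $t\le t^*$, $s(t)=\gamma(t-t^* )$ for $t>t^*$, $\alpha,\beta,\gamma>0$, $t^*$ the desired arrival time. A short-run equilibrium under perimeter control is $(n(\cdot),q(\cdot),C_s^{bp*})$ with $C_s^{bp}(t)=C_s^{bp*}$ if $n(t)>0$ and $\ge C_s^{bp*}$ if $n(t)=0$; $n(t)=n_j/2$ if $q(t)>0$ and $n(t)\le n_j/2$ if $q(t)=0$; and $\int_{\mathbb{R}}n(t)v(t)/L\,dt=N_s$. *)

From Stdlib Require Import Reals.
From Coquelicot Require Import Coquelicot.
Open Scope R_scope.

Definition speed (vf nj n : R) : R := vf * (1 - n / nj).

Definition outflow (L vf nj n : R) : R := n * speed vf nj n / L.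

Definition Ip (L vf nj : R) : R := nj * vf / (4 * L).

Definition sdelay (beta gamma tstar t : R) : R :=
  if Rle_dec t tstar then beta * (tstar - t) else gamma * (t - tstar).

(* downtown travel time under perimeter control T^p(t), control active on
   [ts, te]; waiting time T_w(t) = q(t) / I_p *)
Definition Tp (L vf nj ts te : R) (n q : R -> R) (t : R) : R :=
  if Rlt_dec ts t then
    (if Rle_dec t te then L / (vf / 2) + q t / Ip L vf nj
     else L / speed vf nj (n t))
  else L / speed vf nj (n t).

Definition Cbp (L vf nj alpha beta gamma tstar ts te : R) (n q : R -> R)
  (t : R) : R :=
  alpha * Tp L vf nj ts te n q t + sdelay beta gamma tstar t.

(* [ts, te] is the period during which control is active, i.e. the
   accumulation sits at the critical value n_j / 2 *)
Definition control_period (nj ts te : R) (n : R -> R) : Prop :=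
  forall t, n t = nj / 2 <-> ts <= t <= te.

Definition is_equilibrium (L vf nj alpha beta gamma tstar ts te Ns : R)
  (n q : R -> R) (Cstar : R) : Prop :=
  (forall t, 0 <= n t) /\
  (forall t, 0 <= q t) /\
  (forall t, 0 < n t -> Cbp L vf nj alpha beta gamma tstar ts te n q t = Cstar) /\
  (forall t, n t = 0 -> Cstar <= Cbp L vf nj alpha beta gamma tstar ts te n q t) /\
  (forall t, 0 < q t -> n t = nj / 2) /\
  (forall t, q t = 0 -> n t <= nj / 2) /\
  is_RInt_gen (fun t => outflow L vf nj (n t))
    (Rbar_locally m_infty) (Rbar_locally p_infty) Ns.

Definition Fp (alpha beta gamma nj Ns theta : R) : R :=
  Ns - alpha * nj * (1 / beta + 1 / gamma) * (theta / 4 + ln 2 - 1).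

From Stdlib Require Import Reals Lra FunctionalExtensionality.
From Coquelicot Require Import Coquelicot.
Open Scope R_scope.

(* Every commuter who travels bears the cost C*, so the travel time of one
   arriving at t, in units of the free-flow time L / v_f, is the tent
   X(t) = theta^p - s(t) v_f / (alpha L) with apex theta^p at t*.  Travel time
   determines the state of the bathtub: n = n_j (1 - 1/X) for 1 <= X <= 2 and,
   while control is active, q = n_j (X - 2) / 4.  Hence the outflow is
   (n_j v_f / L) H(X(t)) for one fixed profile H, and integrating over the tent
   gives N_s = alpha n_j (1/beta + 1/gamma) P(theta^p) with P' = H.  As
   P(2) = ln 2 - 1/2, the hypothesis on N_s forces theta^p > 2, where P is
   affine; this is F^p(theta^p) = 0, and the queue inherits the monotonicity of
   the tent on either side of t*. *)

(* The outflow n v / L in units of n_j v_f / L, as a function of X = n_j / (n_j - n);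
   it is capped at the capacity I_p once X >= 2. *)
Definition flow_profile (x : R) : R :=
  if Rle_dec x 1 then 0 else if Rle_dec x 2 then (x - 1) / (x * x) else 1 / 4.

Definition flow_primitive (x : R) : R :=
  if Rle_dec x 1 then 0 else if Rle_dec x 2 then ln x + 1 / x - 1
  else ln 2 - 1 / 2 + (x - 2) / 4.

Lemma flow_profile_le_1 x : x <= 1 -> flow_profile x = 0.
Proof. intros Hx. unfold flow_profile. destruct (Rle_dec x 1); [reflexivity | lra]. Qed.

Lemma flow_profile_mid x : 1 <= x <= 2 -> flow_profile x = (x - 1) / (x * x).
Proof.
  intros Hx. unfold flow_profile. destruct (Rle_dec x 1).
  - replace x with 1 by lra. field.
  - destruct (Rle_dec x 2); [reflexivity | lra].
Qed.

Lemma flow_profile_ge_2 x : 2 <= x -> flow_profile x = 1 / 4.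
Proof.
  intros Hx. destruct (Req_dec x 2) as [->|Hne].
  - rewrite flow_profile_mid by lra. field.
  - unfold flow_profile. destruct (Rle_dec x 1); [lra|].
    destruct (Rle_dec x 2); [lra | reflexivity].
Qed.

Lemma flow_profile_nonneg x : 0 <= flow_profile x.
Proof.
  unfold flow_profile. destruct (Rle_dec x 1); [lra|].
  destruct (Rle_dec x 2); [|lra].
  apply Rle_mult_inv_pos; nra.
Qed.

Lemma flow_primitive_le_1 x : x <= 1 -> flow_primitive x = 0.
Proof. intros Hx. unfold flow_primitive. destruct (Rle_dec x 1); [reflexivity | lra]. Qed.

Lemma flow_primitive_mid x : 1 <= x <= 2 -> flow_primitive x = ln x + 1 / x - 1.
Proof.
  intros Hx. unfold flow_primitive. destruct (Rle_dec x 1).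
  - replace x with 1 by lra. rewrite ln_1. field.
  - destruct (Rle_dec x 2); [reflexivity | lra].
Qed.

Lemma flow_primitive_ge_2 x : 2 <= x -> flow_primitive x = ln 2 - 1 / 2 + (x - 2) / 4.
Proof.
  intros Hx. destruct (Req_dec x 2) as [->|Hne].
  - rewrite flow_primitive_mid by lra. field.
  - unfold flow_primitive. destruct (Rle_dec x 1); [lra|].
    destruct (Rle_dec x 2); [lra | reflexivity].
Qed.

Lemma is_RInt_primitive_Chasles (f F : R -> R) (a m b : R) :
  is_RInt f a m (F m - F a) -> is_RInt f m b (F b - F m) ->
  is_RInt f a b (F b - F a).
Proof.
  intros Ham Hmb.
  replace (F b - F a) with (plus (F m - F a) (F b - F m)).
  - exact (is_RInt_Chasles f a m b _ _ Ham Hmb).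
  - unfold plus; simpl. ring.
Qed.

Lemma is_RInt_primitive_glue (f F : R -> R) (lo hi : Rbar) (c : R) :
  (forall a b : R, Rbar_le lo a -> a <= b <= c -> is_RInt f a b (F b - F a)) ->
  (forall a b : R, c <= a <= b -> Rbar_le b hi -> is_RInt f a b (F b - F a)) ->
  forall a b : R, Rbar_le lo a -> a <= b -> Rbar_le b hi ->
  is_RInt f a b (F b - F a).
Proof.
  intros Hlo Hhi a b Ha Hab Hb.
  destruct (Rle_dec b c); [apply Hlo; [exact Ha | lra]|].
  destruct (Rle_dec c a); [apply Hhi; [lra | exact Hb]|].
  apply is_RInt_primitive_Chasles with c.
  - apply Hlo; [exact Ha | lra].
  - apply Hhi; [lra | exact Hb].
Qed.

Lemma is_RInt_const_on (f : R -> R) (k a b : R) :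
  a <= b -> (forall x, a < x < b -> f x = k) -> is_RInt f a b (k * (b - a)).
Proof.
  intros Hab Hf.
  apply is_RInt_ext with (fun _ => k).
  - intros x Hx. rewrite Rmin_left, Rmax_right in Hx by lra. symmetry. apply Hf, Hx.
  - replace (k * (b - a)) with (scal (b - a) k) by (unfold scal; simpl; unfold mult; simpl; ring).
    apply (is_RInt_const (V := R_NormedModule)).
Qed.

Lemma is_RInt_flow_profile_le_1 a b : a <= b <= 1 ->
  is_RInt flow_profile a b (flow_primitive b - flow_primitive a).
Proof.
  intros Hab. rewrite !flow_primitive_le_1 by lra.
  replace (0 - 0) with (0 * (b - a)) by ring.
  apply is_RInt_const_on; [lra|]. intros x Hx. apply flow_profile_le_1. lra.
Qed.

Lemma is_RInt_flow_profile_ge_2 a b : 2 <= a <= b ->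
  is_RInt flow_profile a b (flow_primitive b - flow_primitive a).
Proof.
  intros Hab. rewrite !flow_primitive_ge_2 by lra.
  replace (_ - _) with (1 / 4 * (b - a)) by field.
  apply is_RInt_const_on; [lra|]. intros x Hx. apply flow_profile_ge_2. lra.
Qed.

Lemma is_RInt_flow_profile_mid a b : 1 <= a <= b -> b <= 2 ->
  is_RInt flow_profile a b (flow_primitive b - flow_primitive a).
Proof.
  intros Hab Hb. rewrite !flow_primitive_mid by lra.
  apply is_RInt_ext with (fun x => (x - 1) / (x * x)).
  { intros x Hx. rewrite Rmin_left, Rmax_right in Hx by lra.
    symmetry. apply flow_profile_mid. lra. }
  replace (ln b + 1 / b - 1 - (ln a + 1 / a - 1))
    with (minus ((fun x => ln x + 1 / x) b) ((fun x => ln x + 1 / x) a))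
    by (unfold minus, plus, opp; simpl; ring).
  apply (is_RInt_derive (V := R_CompleteNormedModule) (fun x => ln x + 1 / x));
    intros x Hx; rewrite Rmin_left, Rmax_right in Hx by lra.
  - auto_derive; [lra|]. field. lra.
  - apply (ex_derive_continuous (K := R_AbsRing) (V := R_NormedModule)). auto_derive. nra.
Qed.

Lemma is_RInt_flow_profile a b :
  is_RInt flow_profile a b (flow_primitive b - flow_primitive a).
Proof.
  assert (Hle : forall a b, a <= b ->
    is_RInt flow_profile a b (flow_primitive b - flow_primitive a)).
  { intros x y Hxy.
    apply (is_RInt_primitive_glue _ _ m_infty p_infty 1); simpl; auto.
    - intros u v _ Huv. apply is_RInt_flow_profile_le_1. lra.
    - intros u v Huv _.
      apply (is_RInt_primitive_glue _ _ 1 p_infty 2); simpl; auto; try lra.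
      + intros s t Hs Hst. apply is_RInt_flow_profile_mid; lra.
      + intros s t Hst _. apply is_RInt_flow_profile_ge_2. lra. }
  destruct (Rle_dec a b) as [Hab|Hba]; [exact (Hle a b Hab)|].
  replace (_ - _) with (opp (flow_primitive a - flow_primitive b))
    by (unfold opp; simpl; ring).
  apply (is_RInt_swap (V := R_NormedModule)), Hle. lra.
Qed.

Lemma flow_primitive_le_2 x : x <= 2 -> flow_primitive x <= ln 2 - 1 / 2.
Proof.
  intros Hx.
  assert (Hincr : 0 <= flow_primitive 2 - flow_primitive x).
  { apply (is_RInt_ge_0 flow_profile x 2); [exact Hx | apply is_RInt_flow_profile |].
    intros y _. apply flow_profile_nonneg. }
  rewrite flow_primitive_ge_2 in Hincr by lra. lra.
Qed.

Lemma sdelay_tstar beta gamma tstar : sdelay beta gamma tstar tstar = 0.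
Proof. unfold sdelay. destruct (Rle_dec tstar tstar); [ring | lra]. Qed.

Lemma sdelay_decreasing beta gamma tstar t1 t2 :
  0 < beta -> t1 < t2 <= tstar ->
  sdelay beta gamma tstar t2 < sdelay beta gamma tstar t1.
Proof.
  intros Hb Ht. unfold sdelay.
  destruct (Rle_dec t1 tstar); [|lra]. destruct (Rle_dec t2 tstar); [nra | lra].
Qed.

Lemma sdelay_increasing beta gamma tstar t1 t2 :
  0 < gamma -> tstar <= t1 < t2 ->
  sdelay beta gamma tstar t1 < sdelay beta gamma tstar t2.
Proof.
  intros Hg Ht. unfold sdelay.
  destruct (Rle_dec t2 tstar); [lra|].
  destruct (Rle_dec t1 tstar); [replace t1 with tstar by lra|]; nra.
Qed.

Lemma is_RInt_sdelay_comp (f F : R -> R) (K beta gamma tstar theta a b : R) :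
  (forall x y, is_RInt f x y (F y - F x)) ->
  0 < K -> 0 < beta -> 0 < gamma -> a <= tstar <= b ->
  is_RInt (fun t => f (theta - sdelay beta gamma tstar t / K)) a b
    (K / beta * (F theta - F (theta - beta * (tstar - a) / K))
     + K / gamma * (F theta - F (theta - gamma * (b - tstar) / K))).
Proof.
  intros HF HK Hb Hg Hab.
  apply (is_RInt_Chasles (V := R_NormedModule) _ a tstar b).
  - pose proof (is_RInt_comp_lin f (beta / K) (theta - beta * tstar / K) a tstar _
      (HF _ _)) as Hlin.
    apply (is_RInt_scal _ _ _ (K / beta)) in Hlin.
    replace (beta / K * tstar + (theta - beta * tstar / K)) with theta in Hlin
      by (field; lra).
    replace (beta / K * a + (theta - beta * tstar / K))
      with (theta - beta * (tstar - a) / K) in Hlin by (field; lra).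
    apply (is_RInt_ext (V := R_NormedModule)) with (2 := Hlin).
    intros t Ht. rewrite Rmin_left, Rmax_right in Ht by lra.
    unfold sdelay. destruct (Rle_dec t tstar); [|lra].
    unfold scal; simpl; unfold mult; simpl.
    replace (theta - beta * (tstar - t) / K) with (beta / K * t + (theta - beta * tstar / K))
      by (field; lra).
    field. lra.
  - pose proof (is_RInt_comp_lin f (- gamma / K) (theta + gamma * tstar / K) tstar b _
      (HF _ _)) as Hlin.
    apply (is_RInt_scal _ _ _ (- K / gamma)) in Hlin.
    replace (- gamma / K * tstar + (theta + gamma * tstar / K)) with theta in Hlin
      by (field; lra).
    replace (- gamma / K * b + (theta + gamma * tstar / K))
      with (theta - gamma * (b - tstar) / K) in Hlin by (field; lra).
    replace (K / gamma * (F theta - F (theta - gamma * (b - tstar) / K)))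
      with (scal (- K / gamma) (F (theta - gamma * (b - tstar) / K) - F theta))
      by (unfold scal; simpl; unfold mult; simpl; field; lra).
    apply (is_RInt_ext (V := R_NormedModule)) with (2 := Hlin).
    intros t Ht. rewrite Rmin_left, Rmax_right in Ht by lra.
    unfold sdelay. destruct (Rle_dec t tstar); [lra|].
    unfold scal; simpl; unfold mult; simpl.
    replace (theta - gamma * (t - tstar) / K)
      with (- gamma / K * t + (theta + gamma * tstar / K)) by (field; lra).
    field. lra.
Qed.

Lemma is_RInt_gen_stationary (f : R -> R) (A B V : R) :
  (forall a b, a <= A -> B <= b -> is_RInt f a b V) ->
  is_RInt_gen f (Rbar_locally m_infty) (Rbar_locally p_infty) V.
Proof.
  intros Hf Q HQ.
  apply Filter_prod with (fun a => a < A) (fun b => B < b).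
  - exists A. auto.
  - exists B. auto.
  - intros a b Ha Hb. exists V. split.
    + apply Hf; simpl in *; lra.
    + apply locally_singleton, HQ.
Qed.

Lemma is_RInt_gen_R_unique (f : R -> R) (l1 l2 : R) :
  is_RInt_gen f (Rbar_locally m_infty) (Rbar_locally p_infty) l1 ->
  is_RInt_gen f (Rbar_locally m_infty) (Rbar_locally p_infty) l2 -> l1 = l2.
Proof.
  intros H1 H2.
  now rewrite <- (is_RInt_gen_unique f l1 H1), <- (is_RInt_gen_unique f l2 H2).
Qed.

Lemma is_RInt_gen_sdelay_comp (f F : R -> R) (K beta gamma tstar theta : R) :
  (forall x y, is_RInt f x y (F y - F x)) -> (forall x, x <= 1 -> F x = 0) ->
  0 < K -> 0 < beta -> 0 < gamma ->
  is_RInt_gen (fun t => f (theta - sdelay beta gamma tstar t / K))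
    (Rbar_locally m_infty) (Rbar_locally p_infty)
    (K * (1 / beta + 1 / gamma) * F theta).
Proof.
  intros HF HF0 HK Hb Hg.
  assert (Hfar : forall c d, 0 < c -> K * Rabs theta / c <= d ->
                  0 <= d /\ theta - c * d / K <= 1).
  { intros c d Hc Hd.
    assert (Hpos : 0 <= K * Rabs theta / c)
      by (apply Rle_mult_inv_pos; [apply Rmult_le_pos, Rabs_pos|]; lra).
    assert (Hgap : c * d / K - Rabs theta = c / K * (d - K * Rabs theta / c))
      by (field; lra).
    assert (0 <= c / K * (d - K * Rabs theta / c))
      by (apply Rmult_le_pos; [apply Rle_mult_inv_pos|]; lra).
    pose proof (Rle_abs theta). lra. }
  apply (is_RInt_gen_stationary _ (tstar - K * Rabs theta / beta)
           (tstar + K * Rabs theta / gamma)).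
  intros a b Ha Hb'.
  destruct (Hfar beta (tstar - a)) as [Ha0 Ha1]; [lra | lra |].
  destruct (Hfar gamma (b - tstar)) as [Hb0 Hb1]; [lra | lra |].
  replace (K * (1 / beta + 1 / gamma) * F theta)
    with (K / beta * (F theta - F (theta - beta * (tstar - a) / K))
          + K / gamma * (F theta - F (theta - gamma * (b - tstar) / K)))
    by (rewrite (HF0 _ Ha1), (HF0 _ Hb1); field; lra).
  apply is_RInt_sdelay_comp; auto; lra.
Qed.

Lemma outflow_flow_profile L vf nj x : 0 < L -> 0 < nj -> 0 <= x <= nj / 2 ->
  outflow L vf nj x = nj * vf / L * flow_profile (nj / (nj - x)).
Proof.
  intros HL Hnj Hx.
  assert (Hrel : nj / (nj - x) * (nj - x) = nj) by (field; lra).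
  rewrite flow_profile_mid by nra.
  unfold outflow, speed. field. lra.
Qed.

(* The travel time, in units of L / vf, that gives cost Cstar to a commuter
   arriving at t. *)
Definition rel_time (L vf alpha beta gamma tstar Cstar t : R) : R :=
  Cstar * vf / (alpha * L) - sdelay beta gamma tstar t / (alpha * L / vf).

Section Equilibrium.

Context {L vf nj alpha beta gamma tstar Ns ts te : R} {n q : R -> R} {Cstar : R}.

Hypothesis Heq : is_equilibrium L vf nj alpha beta gamma tstar ts te Ns n q Cstar.
Hypothesis Hcp : control_period nj ts te n.
Hypotheses (HL : 0 < L) (Hvf : 0 < vf) (Hnj : 0 < nj) (Ha : 0 < alpha)
  (Hb : 0 < beta) (Hg : 0 < gamma).
Hypothesis HNs : Ns > alpha * nj * (1 / beta + 1 / gamma) * (ln 2 - 1 / 2).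

Local Notation X := (rel_time L vf alpha beta gamma tstar Cstar).
Local Notation theta := (Cstar * vf / (alpha * L)).

Let n_nonneg : forall t, 0 <= n t. Proof. apply Heq. Qed.
Let q_nonneg : forall t, 0 <= q t. Proof. apply Heq. Qed.
Let cost_active : forall t, 0 < n t ->
  Cbp L vf nj alpha beta gamma tstar ts te n q t = Cstar.
Proof. apply Heq. Qed.
Let cost_idle : forall t, n t = 0 ->
  Cstar <= Cbp L vf nj alpha beta gamma tstar ts te n q t.
Proof. apply Heq. Qed.
Let queue_critical : forall t, 0 < q t -> n t = nj / 2. Proof. apply Heq. Qed.
Let no_queue_subcritical : forall t, q t = 0 -> n t <= nj / 2. Proof. apply Heq. Qed.
Let Ns_integral : is_RInt_gen (fun t => outflow L vf nj (n t))
  (Rbar_locally m_infty) (Rbar_locally p_infty) Ns.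
Proof. apply Heq. Qed.

Lemma Tp_sub_rel_time t :
  vf / L * Tp L vf nj ts te n q t - X t
  = (Cbp L vf nj alpha beta gamma tstar ts te n q t - Cstar) * vf / (alpha * L).
Proof. unfold rel_time, Cbp. field. lra. Qed.

Lemma rel_time_active t : 0 < n t -> X t = vf / L * Tp L vf nj ts te n q t.
Proof.
  intros Hn. pose proof (Tp_sub_rel_time t) as Hdiff.
  rewrite (cost_active t Hn), Rminus_diag, !Rmult_0_l in Hdiff. lra.
Qed.

Lemma Tp_off_control t : n t <> nj / 2 ->
  Tp L vf nj ts te n q t = L / speed vf nj (n t).
Proof.
  intros Hn. unfold Tp.
  destruct (Rlt_dec ts t); [|reflexivity]. destruct (Rle_dec t te); [|reflexivity].
  exfalso. apply Hn, Hcp. lra.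
Qed.

Lemma accumulation_le_critical t : n t <= nj / 2.
Proof.
  destruct (Rle_lt_or_eq_dec 0 (q t) (q_nonneg t)) as [Hq|Hq].
  - rewrite (queue_critical t Hq). lra.
  - apply no_queue_subcritical. auto.
Qed.

Lemma rel_time_empty t : n t = 0 -> X t <= 1.
Proof.
  intros Hn. pose proof (Tp_sub_rel_time t) as Hdiff.
  rewrite Tp_off_control in Hdiff by lra.
  assert (Hcost : 0 <= (Cbp L vf nj alpha beta gamma tstar ts te n q t - Cstar)
                       * vf / (alpha * L)).
  { apply Rle_mult_inv_pos; [|nra]. apply Rmult_le_pos; [|lra].
    pose proof (cost_idle t Hn). lra. }
  replace (vf / L * (L / speed vf nj (n t))) with 1 in Hdiff
    by (rewrite Hn; unfold speed; field; lra).
  lra.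
Qed.

Lemma rel_time_subcritical t : 0 < n t < nj / 2 -> X t = nj / (nj - n t).
Proof.
  intros Hn. rewrite rel_time_active, Tp_off_control by lra.
  unfold speed. field. lra.
Qed.

Lemma rel_time_lt_2 t : n t < nj / 2 -> X t < 2.
Proof.
  intros Hn. destruct (Rle_lt_or_eq_dec 0 (n t) (n_nonneg t)) as [Hpos|Hzero].
  - rewrite rel_time_subcritical by lra.
    assert (nj / (nj - n t) * (nj - n t) = nj) by (field; lra). nra.
  - pose proof (rel_time_empty t (eq_sym Hzero)). lra.
Qed.

Lemma queue_rel_time t : ts < t <= te -> q t = nj / 4 * (X t - 2).
Proof.
  intros Ht. assert (Hn : n t = nj / 2) by (apply Hcp; lra).
  rewrite rel_time_active by lra. unfold Tp.
  destruct (Rlt_dec ts t); [|lra]. destruct (Rle_dec t te); [|lra].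
  unfold Ip. field. lra.
Qed.

Lemma rel_time_control_start : ts <= te -> X ts = 2.
Proof.
  intros Hts. assert (Hn : n ts = nj / 2) by (apply Hcp; lra).
  rewrite rel_time_active by lra. unfold Tp.
  destruct (Rlt_dec ts ts); [lra|].
  rewrite Hn. unfold speed. field. lra.
Qed.

Lemma rel_time_control t : n t = nj / 2 -> 2 <= X t.
Proof.
  intros Hn. apply Hcp in Hn.
  destruct (Req_dec t ts) as [->|Hne].
  - rewrite rel_time_control_start by lra. lra.
  - pose proof (queue_rel_time t ltac:(lra)). pose proof (q_nonneg t). nra.
Qed.

Lemma outflow_rel_time t :
  outflow L vf nj (n t) = nj * vf / L * flow_profile (X t).
Proof.
  pose proof (accumulation_le_critical t).
  destruct (Req_dec (n t) (nj / 2)) as [Hcrit|Hsub].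
  - rewrite flow_profile_ge_2 by (apply rel_time_control; exact Hcrit).
    unfold outflow, speed. rewrite Hcrit. field. lra.
  - destruct (Rle_lt_or_eq_dec 0 (n t) (n_nonneg t)) as [Hpos|Hzero].
    + rewrite rel_time_subcritical by lra. apply outflow_flow_profile; lra.
    + rewrite flow_profile_le_1 by (apply rel_time_empty; auto).
      unfold outflow. rewrite <- Hzero. unfold Rdiv. ring.
Qed.

Lemma Ns_flow_primitive :
  Ns = alpha * nj * (1 / beta + 1 / gamma) * flow_primitive theta.
Proof.
  pose (K := alpha * L / vf).
  assert (HK : 0 < K) by (unfold K; apply Rdiv_lt_0_compat; [apply Rmult_lt_0_compat|]; lra).
  assert (Hprofile : is_RInt_gen (fun t => outflow L vf nj (n t))
            (Rbar_locally m_infty) (Rbar_locally p_infty)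
            (scal (nj * vf / L) (K * (1 / beta + 1 / gamma) * flow_primitive theta))).
  { replace (fun t => outflow L vf nj (n t))
      with (fun t => scal (nj * vf / L) (flow_profile (theta - sdelay beta gamma tstar t / K))).
    - apply (is_RInt_gen_scal (V := R_NormedModule)
               (fun t => flow_profile (theta - sdelay beta gamma tstar t / K))).
      apply is_RInt_gen_sdelay_comp; auto.
      + exact is_RInt_flow_profile.
      + exact flow_primitive_le_1.
    - apply functional_extensionality. intros t. rewrite outflow_rel_time. reflexivity. }
  rewrite (is_RInt_gen_R_unique _ _ _ Ns_integral Hprofile).
  unfold scal; simpl; unfold mult; simpl; unfold K. field. lra.
Qed.

Lemma theta_gt_2 : 2 < theta.
Proof.
  destruct (Rlt_le_dec 2 theta) as [Hgt|Hle]; [exact Hgt|].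
  assert (Hcoef : 0 < alpha * nj * (1 / beta + 1 / gamma)).
  { apply Rmult_lt_0_compat; [nra|].
    apply Rplus_lt_0_compat; apply Rdiv_lt_0_compat; lra. }
  pose proof (Rmult_le_compat_l _ _ _ (Rlt_le _ _ Hcoef) (flow_primitive_le_2 _ Hle)).
  rewrite <- Ns_flow_primitive in *. lra.
Qed.

Lemma rel_time_tstar : X tstar = theta.
Proof. unfold rel_time. rewrite sdelay_tstar. unfold Rdiv. ring. Qed.

Lemma rel_time_lt_of_sdelay t1 t2 :
  sdelay beta gamma tstar t2 < sdelay beta gamma tstar t1 -> X t1 < X t2.
Proof.
  intros Hs. unfold rel_time.
  apply Rplus_lt_compat_l, Ropp_lt_contravar, Rmult_lt_compat_r; [|exact Hs].
  apply Rinv_0_lt_compat, Rdiv_lt_0_compat; [apply Rmult_lt_0_compat|]; lra.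
Qed.

Lemma tstar_in_control : ts < tstar <= te.
Proof.
  pose proof theta_gt_2 as Htheta.
  assert (Hcrit : n tstar = nj / 2).
  { destruct (Req_dec (n tstar) (nj / 2)) as [E|E]; [exact E|].
    pose proof (accumulation_le_critical tstar).
    pose proof (rel_time_lt_2 tstar ltac:(lra)). rewrite rel_time_tstar in *. lra. }
  apply Hcp in Hcrit. split; [|lra].
  destruct (Req_dec ts tstar) as [E|E]; [|lra].
  pose proof (rel_time_control_start ltac:(lra)). rewrite E, rel_time_tstar in *. lra.
Qed.

Lemma queue_tstar_pos : 0 < q tstar.
Proof.
  rewrite queue_rel_time by apply tstar_in_control. rewrite rel_time_tstar.
  pose proof theta_gt_2. nra.
Qed.

Lemma queue_increasing t1 t2 : ts < t1 -> t1 < t2 -> t2 <= tstar -> q t1 < q t2.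
Proof.
  intros H1 H12 H2. pose proof tstar_in_control.
  rewrite !queue_rel_time by lra.
  pose proof (rel_time_lt_of_sdelay t1 t2 (sdelay_decreasing _ gamma _ _ _ Hb (conj H12 H2))).
  nra.
Qed.

Lemma queue_decreasing t1 t2 : tstar <= t1 -> t1 < t2 -> t2 <= te -> q t2 < q t1.
Proof.
  intros H1 H12 H2. pose proof tstar_in_control.
  rewrite !queue_rel_time by lra.
  pose proof (rel_time_lt_of_sdelay t2 t1 (sdelay_increasing beta _ _ _ _ Hg (conj H1 H12))).
  nra.
Qed.

Lemma Fp_theta : Fp alpha beta gamma nj Ns theta = 0.
Proof.
  unfold Fp. rewrite Ns_flow_primitive, flow_primitive_ge_2 by (pose proof theta_gt_2; lra).
  field. lra.
Qed.

End Equilibrium.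

Theorem lemma4 (L vf nj alpha beta gamma tstar Ns ts te : R)
  (n q : R -> R) (Cstar : R) :
  0 < L -> 0 < vf -> 0 < nj -> 0 < alpha -> 0 < beta -> 0 < gamma ->
  Ns > alpha * nj * (1 / beta + 1 / gamma) * (ln 2 - 1 / 2) ->
  control_period nj ts te n ->
  is_equilibrium L vf nj alpha beta gamma tstar ts te Ns n q Cstar ->
  let thetap := Cstar * vf / (alpha * L) in
  Fp alpha beta gamma nj Ns thetap = 0 /\
  (exists t, 0 < q t) /\
  (forall t1 t2, ts < t1 -> t1 < t2 -> t2 <= tstar -> q t1 < q t2) /\
  (forall t1 t2, tstar <= t1 -> t1 < t2 -> t2 <= te -> q t2 < q t1).
Proof.
  intros HL Hvf Hnj Ha Hb Hg HNs Hcp Heq thetap.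
  split; [|split; [|split]].
  - eapply Fp_theta; eassumption.
  - exists tstar. eapply queue_tstar_pos; eassumption.
  - intros t1 t2. eapply queue_increasing; eassumption.
  - intros t1 t2. eapply queue_decreasing; eassumption.
Qed.
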